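(* Let $m,n\in\mathbb N$, $p\in(0,1)$, $\pi\in(0,1/2)$, and let $R\in\mathbb F_2^{m\times n}$ be a random matrix with mutually independent columns, each column being zero with probability $1-p$ and otherwise consisting of i.i.d. $\mathrm{Bern}(\pi)$ entries. For $1\le k\le n$ let $x_k\in\mathbb F_2^n$ have exactly $k$ ones. Then $$\mathbb P(Rx_k=0)\le 2^{-m}\Bigl[1+\exp(-kp\pi)+2\exp\Bigl(-\tfrac kmD\bigl(\tfrac p2;p\bigr)\Bigr)\Bigr]^m.$$ In addition, $$\mathbb P(Rx_k=0)\le e^{-kmp\pi/4}\quad\text{for all } 1\le k\le k^*,$$ where $k^*=\max\bigl\{k:\ (1-2\pi)^k\ge\tfrac12\text{ and }\bigl(1-\tfrac{\pi k}{2}\bigr)^m\ge\tfrac12\bigr\}$.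
   Context: $D(q;p)=q\log\frac qp+(1-q)\log\frac{1-q}{1-p}$ is the Kullback–Leibler divergence of $\mathrm{Bern}(q)$ from $\mathrm{Bern}(p)$. Arithmetic in $Rx_k$ is over $\mathbb F_2$. *)

From HB Require Import structures.
From mathcomp Require Import all_boot all_order all_algebra.
From mathcomp.reals Require Import reals.
From mathcomp.analysis Require Import sequences exp.
Set Implicit Arguments. Unset Strict Implicit. Unset Printing Implicit Defensive.
Import Order.TTheory GRing.Theory Num.Theory.
Local Open Scope ring_scope.

Definition cweight (m : nat) (c : 'cV['F_2]_m) : nat :=
  #|[set i | c i ord0 != 0]|.

(* Law of one column: zero with prob. 1-p, otherwise i.i.d. Bern(pi) entries
   (i.e. the mixture (1-p) delta_0 + p Bern(pi)^{m}). *)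
Definition col_prob (R : realType) (m : nat) (p pi : R) (c : 'cV['F_2]_m) : R :=
  (1 - p) * (c == 0)%:R + p * (pi ^+ cweight c * (1 - pi) ^+ (m - cweight c)).

Definition mat_prob (R : realType) (m n : nat) (p pi : R) (M : 'M['F_2]_(m, n)) : R :=
  \prod_(j < n) col_prob p pi (col j M).

Definition prob_kernel (R : realType) (m n : nat) (p pi : R) (x : 'cV['F_2]_n) : R :=
  \sum_(M : 'M['F_2]_(m, n) | M *m x == 0) mat_prob p pi M.

Definition KL (R : realType) (q p : R) : R :=
  q * ln (q / p) + (1 - q) * ln ((1 - q) / (1 - p)).

Definition kstar_cond (R : realType) (m : nat) (pi : R) (k : nat) : Prop :=
  (1 - 2 * pi) ^+ k >= 1/2 /\ (1 - pi * k%:R / 2) ^+ m >= 1/2.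

From HB Require Import structures.
From mathcomp Require Import all_boot all_order all_algebra.
From mathcomp.reals Require Import reals.
From mathcomp.analysis Require Import sequences exp.
From mathcomp Require Import zify ring lra.
Import Order.TTheory GRing.Theory Num.Theory.
Set Implicit Arguments. Unset Strict Implicit. Unset Printing Implicit Defensive.
Local Open Scope ring_scope.

(* With chi(b) = (-1)^b, the indicator of v = 0 in F_2^m
      is 2^-m sum_u chi(u.v).  Applied to v = R x, independence of the columns
      and the column Fourier coefficient E[chi(u.c)] = 1 - p + p (1-2pi)^|u|
      give P(R x = 0) = 2^-m sum_u (1 - p + p (1-2pi)^|u|)^k.
   2. Binomial mixture.  Expanding the k-th power and summing over u gives
      P(R x = 0) = E[((1 + (1-2pi)^N)/2)^m] with N ~ Bin(k, p).
   3. First bound: split on N >= kp/2, where the factor is at most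
      (1 + exp(-kp pi))/2, and N < kp/2, whose probability is at most
      exp(-k D(p/2; p)) by a Chernoff bound; then a^m + b^m <= (a + b)^m.
   4. Second bound: when (1-2pi)^k >= 1/2 and (1-pi/2)^m >= 1/2 (implied by
      k <= kstar), the factor is at most (1 - m pi/4)^N, and the binomial
      generating function gives (1 - p m pi/4)^k <= exp(-k m p pi/4). *)

Lemma F2_cases (b : 'F_2) : b = 0 \/ b = 1.
Proof. by case: b => [[|[|//]]] Hb; [left|right]; exact: val_inj. Qed.

Lemma F2_add11 : (1 + 1 : 'F_2) = 0.
Proof. exact: val_inj. Qed.

Lemma F2_sum (V : nmodType) (h : 'F_2 -> V) : \sum_b h b = h 0 + h 1.
Proof.
rewrite (bigD1 0) //= (bigD1 1) //= big1 ?addr0 // => b /andP[H0 H1].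
by case: (F2_cases b) H0 H1 => ->; rewrite eqxx.
Qed.

Section ProductSums.
Variable R : comNzRingType.

(* Summing a column-wise product over all matrices factorises over columns;
   this is where independence of the columns is used. *)
Lemma sum_prod_cols (m n : nat) (F : 'I_n -> 'cV['F_2]_m -> R) :
  \sum_(M : 'M['F_2]_(m, n)) \prod_j F j (col j M) = \prod_j \sum_c F j c.
Proof.
rewrite bigA_distr_bigA /=.
rewrite [LHS](reindex (fun f : {ffun 'I_n -> 'cV['F_2]_m} => \matrix_(i, j) f j i ord0)) /=.
  apply: eq_bigr => f _; apply: eq_bigr => j _; congr F.
  by apply/matrixP => i l; rewrite !mxE (ord1 l).
exists (fun M : 'M['F_2]_(m, n) => [ffun j => col j M]) => [f _|M _].
  by apply/ffunP => j; rewrite ffunE; apply/matrixP => i l; rewrite !mxE (ord1 l).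
by apply/matrixP => i j; rewrite !mxE ffunE mxE.
Qed.

Lemma sum_prod_entries (m : nat) (F : 'I_m -> 'F_2 -> R) :
  \sum_(c : 'cV['F_2]_m) \prod_i F i (c i ord0) = \prod_i \sum_b F i b.
Proof.
rewrite bigA_distr_bigA /=.
rewrite [LHS](reindex (fun f : {ffun 'I_m -> 'F_2} => \col_i f i)) /=.
  by apply: eq_bigr => f _; apply: eq_bigr => j _; rewrite mxE.
exists (fun c : 'cV['F_2]_m => [ffun i => c i ord0]) => [f _|c _].
  by apply/ffunP => j; rewrite ffunE mxE.
by apply/matrixP => i l; rewrite !mxE ffunE (ord1 l).
Qed.

Lemma prod_support (m : nat) (c : 'cV['F_2]_m) (a b : R) :
  \prod_i (if c i ord0 == 0 then a else b) = b ^+ cweight c * a ^+ (m - cweight c).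
Proof.
rewrite (bigID (fun i => c i ord0 == 0)) /=.
rewrite [X in X * _](eq_bigr (fun _ => a)); last by move=> i ->.
rewrite [X in _ * X](eq_bigr (fun _ => b)); last by move=> i /negbTE ->.
rewrite mulrC !prodr_const /cweight; congr (_ ^+ _ * _ ^+ _).
  by apply: eq_card => i; rewrite inE.
have Hsplit : (#|[set i | c i ord0 == 0%R]| + #|[set i | c i ord0 != 0%R]| = m)%N.
  rewrite -[RHS](card_ord m) -(cardsC [set i | c i ord0 == 0]); congr (_ + _)%N.
  by apply: eq_card => i; rewrite !inE.
have -> : #|(fun i => c i ord0 == 0)| = #|[set i | c i ord0 == 0]|.
  by apply: eq_card => i; rewrite !inE.
lia.
Qed.

Lemma sum_pow_cweight (m : nat) (t : R) :
  \sum_(u : 'cV['F_2]_m) t ^+ cweight u = (1 + t) ^+ m.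
Proof.
under eq_bigr => u _ do rewrite -[_ ^+ _]mulr1 -(expr1n _ (m - cweight u)) -prod_support.
rewrite (sum_prod_entries (fun i b => if b == 0 then 1 else t)).
rewrite (eq_bigr (fun _ => 1 + t)) ?prodr_const ?card_ord // => i _.
by rewrite F2_sum eqxx oner_eq0.
Qed.

Definition binom_pmf (p : R) (k j : nat) : R := (1 - p) ^+ (k - j) * p ^+ j *+ 'C(k, j).

Lemma binom_pgf (p z : R) (k : nat) :
  \sum_(j < k.+1) binom_pmf p k j * z ^+ j = (1 - p + p * z) ^+ k.
Proof.
rewrite exprDn; apply: eq_bigr => j _.
by rewrite /binom_pmf exprMn mulrnAl -mulrnAr mulrA -mulrnAr.
Qed.

End ProductSums.

Section Characters.
Variable R : comNzRingType.

Definition chi (b : 'F_2) : R := if b == 0 then 1 else -1.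

Lemma chi0 : chi 0 = 1. Proof. by rewrite /chi eqxx. Qed.
Lemma chi1 : chi 1 = -1. Proof. by rewrite /chi oner_eq0. Qed.

Lemma chiD (a b : 'F_2) : chi (a + b) = chi a * chi b.
Proof.
case: (F2_cases a) => ->; case: (F2_cases b) => ->.
all: by rewrite ?addr0 ?add0r ?F2_add11 ?chi0 ?chi1 ?mulrNN ?mulr1 ?mul1r.
Qed.

Lemma chi_sum (I : finType) (f : I -> 'F_2) : chi (\sum_i f i) = \prod_i chi (f i).
Proof. exact: (big_morph chi chiD chi0). Qed.

Lemma sum_chi_mul (c : 'F_2) : \sum_b chi (b * c) = if c == 0 then 2 else 0.
Proof.
rewrite F2_sum mul0r mul1r chi0.
by case: (F2_cases c) => ->; rewrite ?chi0 ?chi1 ?eqxx ?oner_eq0 ?subrr.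
Qed.

Definition dotv (m : nat) (u v : 'cV['F_2]_m) : 'F_2 := \sum_i u i ord0 * v i ord0.

Lemma sum_chi_dotv (m : nat) (v : 'cV['F_2]_m) :
  \sum_(u : 'cV['F_2]_m) chi (dotv u v) = 2 ^+ m * (v == 0)%:R.
Proof.
under eq_bigr => u _ do rewrite /dotv chi_sum.
rewrite (sum_prod_entries (fun i b => chi (b * v i ord0))).
under eq_bigr => i _ do rewrite sum_chi_mul.
have [->|nz] := eqVneq v 0.
  rewrite mulr1 (eq_bigr (fun _ => 2)) ?prodr_const ?card_ord // => i _.
  by rewrite mxE eqxx.
have [i Hi] : exists i, v i ord0 != 0.
  apply/existsP; apply: contraR nz => /existsPn H; apply/eqP/matrixP => i l.
  by rewrite (ord1 l) mxE; move: (H i); rewrite negbK => /eqP.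
by rewrite mulr0 (bigD1 i) //= (negbTE Hi) mul0r.
Qed.

Lemma dotv_mulmx (m n : nat) (u : 'cV['F_2]_m) (M : 'M['F_2]_(m, n)) (x : 'cV['F_2]_n) :
  dotv u (M *m x) = \sum_j x j ord0 * dotv u (col j M).
Proof.
rewrite /dotv.
under eq_bigr do rewrite mxE mulr_sumr.
rewrite exchange_big /=; apply: eq_bigr => j _; rewrite mulr_sumr.
by apply: eq_bigr => i _; rewrite !mxE [RHS]mulrC mulrA.
Qed.

End Characters.

Section FourierFormula.
Variable R : realType.
Implicit Types (p pi : R) (m n : nat).

Lemma col_fourier m p pi (u : 'cV['F_2]_m) :
  \sum_c col_prob p pi c * chi R (dotv u c) = 1 - p + p * (1 - 2 * pi) ^+ cweight u.
Proof.
rewrite /col_prob.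
rewrite (eq_bigr (fun c : 'cV['F_2]_m => (1 - p) * ((c == 0)%:R * chi R (dotv u c)) +
   p * \prod_(i < m) ((if c i ord0 == 0 then 1 - pi else pi) * chi R (u i ord0 * c i ord0))));
  last first.
  move=> c _; rewrite mulrDl -!mulrA; congr (_ + _ * _).
  by rewrite big_split /= prod_support /dotv chi_sum mulrA.
rewrite big_split /= -!mulr_sumr -[in RHS](mulr1 (1 - p)); congr (_ * _ + _ * _).
  rewrite (bigD1 0) //= eqxx mul1r big1 ?addr0; last by move=> c /negbTE ->; rewrite mul0r.
  by rewrite /dotv big1 ?chi0 // => i _; rewrite mxE mulr0.
rewrite (sum_prod_entries (fun i b => (if b == 0 then 1 - pi else pi) * chi R (u i ord0 * b))).
rewrite (eq_bigr (fun i : 'I_m => if u i ord0 == 0 then 1 else 1 - 2 * pi)).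
  by rewrite prod_support expr1n mulr1.
move=> i _; rewrite F2_sum eqxx oner_eq0 mulr0 mulr1 chi0 mulr1.
by case: (F2_cases (u i ord0)) => ->;
  rewrite ?mul0r ?mul1r ?chi0 ?chi1 ?eqxx ?oner_eq0 ?mulr1; lra.
Qed.

(* The column law is a probability distribution (the coefficient at u = 0). *)
Lemma col_prob_total m p pi : \sum_(c : 'cV['F_2]_m) col_prob p pi c = 1.
Proof.
have := col_fourier p pi (0 : 'cV['F_2]_m).
have -> : cweight (0 : 'cV['F_2]_m) = 0%N.
  by apply/eqP; rewrite cards_eq0; apply/eqP/setP => i; rewrite !inE mxE eqxx.
rewrite expr0 mulr1 subrK => <-.
by apply: eq_bigr => c _; rewrite /dotv big1 ?chi0 ?mulr1 // => i _; rewrite mxE mul0r.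
Qed.

Lemma indicator_eq0_fourier m (v : 'cV['F_2]_m) :
  (v == 0)%:R = 2 ^- m * \sum_(u : 'cV['F_2]_m) chi R (dotv u v).
Proof.
have h2 : (2 : R) ^+ m != 0 by rewrite expf_neq0 // pnatr_eq0.
by rewrite sum_chi_dotv mulKf.
Qed.

Lemma col_fourier_scaled m p pi (u : 'cV['F_2]_m) (b : 'F_2) :
  \sum_c col_prob p pi c * chi R (b * dotv u c) =
  if b == 0 then 1 else 1 - p + p * (1 - 2 * pi) ^+ cweight u.
Proof.
case: (F2_cases b) => ->; rewrite ?eqxx ?oner_eq0.
  by rewrite -(col_prob_total m p pi); apply: eq_bigr => c _; rewrite mul0r chi0 mulr1.
by rewrite -col_fourier; apply: eq_bigr => c _; rewrite mul1r.
Qed.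

Lemma prob_kernel_fourier m n p pi (x : 'cV['F_2]_n) :
  prob_kernel m p pi x =
  2 ^- m * \sum_(u : 'cV['F_2]_m) (1 - p + p * (1 - 2 * pi) ^+ cweight u) ^+ cweight x.
Proof.
rewrite /prob_kernel big_mkcond /=.
rewrite (eq_bigr (fun M => (M *m x == 0)%:R * mat_prob p pi M)); last first.
  by move=> M _; case: eqP; rewrite ?mul1r ?mul0r.
under eq_bigr => M _ do rewrite indicator_eq0_fourier -mulrA mulr_suml.
rewrite -mulr_sumr exchange_big /=; congr (_ * _); apply: eq_bigr => u _.
rewrite (eq_bigr (fun M : 'M['F_2]_(m, n) =>
    \prod_j (col_prob p pi (col j M) * chi R (x j ord0 * dotv u (col j M))))); last first.
  by move=> M _; rewrite /mat_prob big_split /= dotv_mulmx chi_sum mulrC.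
rewrite (sum_prod_cols (fun j c => col_prob p pi c * chi R (x j ord0 * dotv u c))).
under eq_bigr => j _ do rewrite col_fourier_scaled.
by rewrite prod_support expr1n mulr1.
Qed.

(* Step 2: P(R x = 0) = E[((1 + (1 - 2 pi)^N) / 2)^m] with N ~ Bin(|x|, p),
   by the binomial theorem and the weight enumerator of F_2^m. *)
Lemma prob_kernel_binomial m n p pi (x : 'cV['F_2]_n) :
  prob_kernel m p pi x =
  \sum_(j < (cweight x).+1)
    binom_pmf p (cweight x) j * ((1 + (1 - 2 * pi) ^+ j) / 2) ^+ m.
Proof.
rewrite prob_kernel_fourier; set k := cweight x; set th := 1 - 2 * pi.
under eq_bigr do rewrite exprDn.
rewrite exchange_big /= mulr_sumr; apply: eq_bigr => j _.
rewrite expr_div_n mulrA mulrC; congr (_ * _).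
rewrite -(sum_pow_cweight m (th ^+ j)) mulr_sumr; apply: eq_bigr => u _.
by rewrite /binom_pmf exprMn -!exprM mulnC mulrA -mulrnAl.
Qed.

End FourierFormula.

Section Estimates.
Variable R : realType.
Implicit Types (p pi a x : R) (k m N : nat).

Lemma binom_pmf_ge0 p k j : 0 <= p -> p <= 1 -> 0 <= binom_pmf p k j.
Proof. by move=> p0 p1; rewrite mulrn_wge0 // mulr_ge0 // exprn_ge0 // subr_ge0. Qed.

Lemma binom_pmf_total p k : \sum_(j < k.+1) binom_pmf p k j = 1.
Proof.
have := binom_pgf p 1 k; rewrite mulr1 subrK expr1n => <-.
by apply: eq_bigr => j _; rewrite expr1n mulr1.
Qed.

Lemma ler_expn2r a (b : R) n : 0 <= a -> a <= b -> a ^+ n <= b ^+ n.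
Proof. by move=> a0 ab; apply: lerXn2r; rewrite ?nnegrE // (le_trans a0 ab). Qed.

Lemma fourier_factor_01 pi N : 0 < pi -> pi < 1/2 ->
  0 <= (1 + (1 - 2 * pi) ^+ N) / 2 <= 1.
Proof.
move=> pi0 pi1.
have h0 : 0 <= (1 - 2 * pi) ^+ N by rewrite exprn_ge0 //; lra.
have h1 : (1 - 2 * pi) ^+ N <= 1 by rewrite exprn_ile1 //; lra.
by apply/andP; split; lra.
Qed.

(* For N >= kp/2: (1 - 2 pi)^N <= exp(-2 pi N) <= exp(-kp pi). *)
Lemma fourier_factor_large p pi k N : 0 < pi -> pi < 1/2 -> k%:R * p <= 2 * N%:R ->
  (1 - 2 * pi) ^+ N <= expR (- (k%:R * p * pi)).
Proof.
move=> pi0 pi1 hN.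
apply: (@le_trans _ _ (expR (- (2 * pi)) ^+ N)).
  by apply: ler_expn2r; [lra | apply: le_trans (expR_ge1Dx _); lra].
by rewrite -expRM_natl ler_expR; nra.
Qed.

(* Chernoff bound for the lower tail of N ~ Bin(k, p):
   P(N < kp/2) <= exp(-k D(p/2; p)), using z^(N - kp/2) with z = (1-p)/(2-p). *)
Lemma binom_lower_tail p k : 0 < p -> p < 1 ->
  \sum_(j < k.+1) (if 2 * j%:R < k%:R * p then binom_pmf p k j else 0)
    <= expR (- (k%:R * KL (p / 2) p)).
Proof.
move=> p0 p1.
set z := (1 - p) / (2 - p).
have z0 : 0 < z by rewrite divr_gt0 //; lra.
have z1 : z < 1 by rewrite ltr_pdivrMr; lra.
have zP : z \in Num.pos by rewrite posrE.
have lz : ln z < 0 by apply: ln_lt0; rewrite z0.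
set c := expR (- (k%:R * p / 2 * ln z)).
have ezN N : z ^+ N = expR (N%:R * ln z) by rewrite expRM_natl lnK.
apply: (@le_trans _ _ (\sum_(j < k.+1) binom_pmf p k j * z ^+ j * c)).
  apply: ler_sum => j _.
  have q0 : 0 <= binom_pmf p k j by apply: binom_pmf_ge0; lra.
  have e0 : 0 <= z ^+ j * c by rewrite mulr_ge0 ?exprn_ge0 ?expR_ge0 //; lra.
  case: ifP => hc; last by rewrite -mulrA mulr_ge0.
  rewrite -mulrA -[X in X <= _]mulr1; apply: ler_wpM2l => //.
  rewrite /c ezN -expRD; apply: le_trans (expR_ge1Dx _).
  have : 0 <= (k%:R * p / 2 - j%:R) * (- ln z) by rewrite mulr_ge0 //; lra.
  lra.
rewrite -mulr_suml binom_pgf.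
have -> : 1 - p + p * z = 2 * z by rewrite /z; field; lra.
have twoP : (2 : R) \in Num.pos by rewrite posrE.
rewrite (_ : (2 * z) ^+ k = expR (k%:R * ln (2 * z))); last first.
  by rewrite expRM_natl lnK // posrE mulr_gt0.
rewrite /c -expRD lnM // ler_expR /KL.
have -> : p / 2 / p = 2^-1 by field; lra.
have -> : (1 - p / 2) / (1 - p) = (2 * z)^-1 by rewrite /z; field; lra.
rewrite lnV // lnV ?lnM // ?posrE ?mulr_gt0 //.
  by rewrite le_eqVlt; apply/orP; left; apply/eqP; ring.
all: rewrite ?invr_gt0; lra.
Qed.

Lemma exprD_ge a (b : R) m : 0 <= a -> 0 <= b -> (1 <= m)%N ->
  a ^+ m + b ^+ m <= (a + b) ^+ m.
Proof.
move=> a0 b0; case: m => [//|m] _; elim: m => [|m IH]; first by rewrite !expr1.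
rewrite !(exprS _ m.+1).
have ha : 0 <= a ^+ m.+1 by rewrite exprn_ge0.
have hb : 0 <= b ^+ m.+1 by rewrite exprn_ge0.
have hab : 0 <= a + b by rewrite addr_ge0.
apply: le_trans (ler_wpM2l hab IH).
have : 0 <= a * b ^+ m.+1 + b * a ^+ m.+1 by rewrite addr_ge0 // mulr_ge0.
lra.
Qed.

Lemma binomial_mixture_bound1 p pi k m : 0 < p -> p < 1 -> 0 < pi -> pi < 1/2 ->
  \sum_(j < k.+1) binom_pmf p k j * ((1 + (1 - 2 * pi) ^+ j) / 2) ^+ m <=
  2 ^- m * (1 + expR (- (k%:R * p * pi))
              + 2 * expR (- (k%:R / m%:R * KL (p / 2) p))) ^+ m.
Proof.
move=> p0 p1 pi0 pi1.
case: m => [|m].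
  by rewrite expr0 invr1 mul1r; under eq_bigr do rewrite expr0 mulr1; rewrite binom_pmf_total.
set A := (1 + expR (- (k%:R * p * pi))) / 2.
set E := expR (- (k%:R / m.+1%:R * KL (p / 2) p)).
have A0 : 0 <= A by rewrite divr_ge0 ?addr_ge0 ?expR_ge0.
have E0 : 0 <= E by rewrite expR_ge0.
(* Each term is bounded by A^m on N >= kp/2 and by 1 on N < kp/2. *)
have split_term (j : 'I_k.+1) :
    binom_pmf p k j * ((1 + (1 - 2 * pi) ^+ j) / 2) ^+ m.+1 <=
    binom_pmf p k j * A ^+ m.+1 + (if 2 * j%:R < k%:R * p then binom_pmf p k j else 0).
  have q0 : 0 <= binom_pmf p k j by apply: binom_pmf_ge0; lra.
  have /andP[g0 g1] := fourier_factor_01 j pi0 pi1.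
  case: ifPn => [_|]; last rewrite -leNgt => hj.
    have : binom_pmf p k j * A ^+ m.+1 >= 0 by rewrite mulr_ge0 ?exprn_ge0.
    have : binom_pmf p k j * ((1 + (1 - 2 * pi) ^+ j) / 2) ^+ m.+1 <= binom_pmf p k j.
      by rewrite -[leRHS]mulr1 ler_wpM2l // exprn_ile1.
    lra.
  rewrite addr0 ler_wpM2l // ler_expn2r // /A.
  have := fourier_factor_large pi0 pi1 hj; lra.
apply: le_trans (ler_sum _ (fun j _ => split_term j)) _.
rewrite big_split /= -mulr_suml binom_pmf_total mul1r.
apply: (@le_trans _ _ (A ^+ m.+1 + E ^+ m.+1)).
  rewrite lerD2l; apply: le_trans (binom_lower_tail k p0 p1) _.
  rewrite /E -expRM_natl mulrN mulrA mulrCA mulfV ?mulr1 //.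
  by rewrite pnatr_eq0.
rewrite (_ : 2 ^- m.+1 * _ = (A + E) ^+ m.+1); first exact: exprD_ge.
by rewrite -exprVn -exprMn; congr (_ ^+ _); rewrite /A; field.
Qed.

Lemma bernoulli_ineq x N : -1 <= x -> 1 + N%:R * x <= (1 + x) ^+ N.
Proof.
move=> hx; elim: N => [|N IH]; first by rewrite mul0r addr0 expr0.
rewrite exprS; have h1 : 0 <= 1 + x by lra.
apply: le_trans (ler_wpM2l h1 IH); rewrite -natr1.
have hN : 0 <= N%:R :> R by rewrite ler0n.
have hx2 : 0 <= N%:R * (x * x) :> R by rewrite mulr_ge0 // sqr_ge0.
nra.
Qed.

(* If (1 - a)^N >= 1/2, then, as (1 - a)^N <= 1 / (1 + N a) by Bernoulli,
   N a <= 1 and (1 - a)^N <= 1 - N a / 2. *)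
Lemma half_power_bound a N : 0 <= a -> a <= 1 -> 1/2 <= (1 - a) ^+ N ->
  N%:R * a <= 1 /\ (1 - a) ^+ N <= 1 - N%:R * a / 2.
Proof.
move=> a0 a1 h.
have hb := @bernoulli_ineq a N ltac:(lra).
have hp : (1 - a) ^+ N * (1 + a) ^+ N <= 1.
  by rewrite -exprMn; apply: exprn_ile1; nra.
have h0 : 0 <= (1 - a) ^+ N by rewrite exprn_ge0 // subr_ge0.
have hN : 0 <= N%:R * a by rewrite mulr_ge0.
have h3 : (1 - a) ^+ N * (1 + N%:R * a) <= 1.
  by apply: le_trans hp; exact: ler_wpM2l.
split; nra.
Qed.

Lemma fourier_factor_small pi m N : 0 < pi -> pi < 1/2 ->
  1/2 <= (1 - 2 * pi) ^+ N -> 1/2 <= (1 - pi / 2) ^+ m ->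
  ((1 + (1 - 2 * pi) ^+ N) / 2) ^+ m <= (1 - m%:R * pi / 4) ^+ N.
Proof.
move=> pi0 pi1 hN hm.
have [_ hthN] := @half_power_bound (2 * pi) N ltac:(lra) ltac:(lra) hN.
have [_ hpim] := @half_power_bound (pi / 2) m ltac:(lra) ltac:(lra) hm.
have hbern := @bernoulli_ineq (- (pi / 2)) N ltac:(lra).
have h0 : 0 <= (1 - 2 * pi) ^+ N by rewrite exprn_ge0 //; lra.
apply: (@le_trans _ _ ((1 - pi / 2) ^+ N ^+ m)).
  by apply: ler_expn2r; [lra | apply: le_trans hbern; lra].
rewrite exprAC; apply: ler_expn2r; last lra.
by rewrite exprn_ge0 //; lra.
Qed.

Lemma binomial_mixture_bound2 p pi k m : 0 < p -> p < 1 -> 0 < pi -> pi < 1/2 ->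
  1/2 <= (1 - 2 * pi) ^+ k -> 1/2 <= (1 - pi / 2) ^+ m ->
  \sum_(j < k.+1) binom_pmf p k j * ((1 + (1 - 2 * pi) ^+ j) / 2) ^+ m <=
  expR (- (k%:R * m%:R * p * pi / 4)).
Proof.
move=> p0 p1 pi0 pi1 hk hm.
have [hmpi _] := @half_power_bound (pi / 2) m ltac:(lra) ltac:(lra) hm.
set r := 1 - m%:R * pi / 4.
apply: (@le_trans _ _ (\sum_(j < k.+1) binom_pmf p k j * r ^+ j)).
  apply: ler_sum => j _; apply: ler_wpM2l; first by apply: binom_pmf_ge0; lra.
  apply: fourier_factor_small => //; apply: le_trans hk _.
  by apply: ler_wiXn2l; [lra | lra | rewrite -ltnS ltn_ord].
rewrite binom_pgf.
have -> : - (k%:R * m%:R * p * pi / 4) = k%:R * (- (p * m%:R * pi / 4)) :> R by ring.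
rewrite expRM_natl; apply: ler_expn2r.
  have hmpi0 : 0 <= m%:R * pi by rewrite mulr_ge0 ?ler0n //; lra.
  have : 0 <= p * (2 - m%:R * pi) by rewrite mulr_ge0 //; lra.
  rewrite /r; lra.
by apply: le_trans (expR_ge1Dx _); rewrite /r; lra.
Qed.

Lemma kstar_cond_hyps m pi K k : 0 < pi -> pi < 1/2 -> kstar_cond m pi K ->
  (1 <= k <= K)%N -> 1/2 <= (1 - 2 * pi) ^+ k /\ 1/2 <= (1 - pi / 2) ^+ m.
Proof.
move=> pi0 pi1 [hK hKm] /andP[k1 kK].
have [hK1 _] := @half_power_bound (2 * pi) K ltac:(lra) ltac:(lra) hK.
have K1 : 1 <= K%:R :> R by rewrite ler1n (leq_trans k1 kK).
split; first by apply: le_trans hK _; apply: ler_wiXn2l => //; lra.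
by apply: le_trans hKm _; apply: ler_expn2r; nra.
Qed.

End Estimates.

Unset Implicit Arguments.

Theorem lemma5 (R : realType) (m n : nat) (p pi : R)
  (hp0 : 0 < p) (hp1 : p < 1) (hpi0 : 0 < pi) (hpi1 : pi < 1/2)
  (k : nat) (x : 'cV['F_2]_n)
  (hk1 : (1 <= k)%N) (hxk : cweight x = k) :
  prob_kernel m p pi x <=
    (2 ^- m) * (1 + expR (- (k%:R * p * pi))
                 + 2 * expR (- (k%:R / m%:R * KL (p / 2) p))) ^+ m
  /\
  (forall kstar : nat,
     kstar_cond m pi kstar ->
     (forall j : nat, kstar_cond m pi j -> (j <= kstar)%N) ->
     (k <= kstar)%N ->
     prob_kernel m p pi x <= expR (- (k%:R * m%:R * p * pi / 4))).
Proof.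
rewrite prob_kernel_binomial hxk; split; first exact: binomial_mixture_bound1.
move=> K hK _ hkK.
have kK : (1 <= k <= K)%N by rewrite hk1.
have [hk hm] := kstar_cond_hyps hpi0 hpi1 hK kK.
exact: binomial_mixture_bound2.
Qed.
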